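(* Let $Z\in\mathfrak{h}_2$, $A=\mathbb{C}^2/(Z\mathbb{Z}^2+\mathrm{diag}(1,4)\mathbb{Z}^2)$, $L_0$ the polarising line bundle of characteristic $0$ on $A$ with respect to $\mathbb{C}^2=Z\mathbb{R}^2+\mathbb{R}^2$, and $C_A=\{\theta_A=0\}$ where $\theta_A=\theta\begin{bmatrix}3\omega\\0\end{bmatrix}(\cdot,Z)-\theta\begin{bmatrix}\omega\\0\end{bmatrix}(\cdot,Z)$, $\omega=(0,\tfrac14)$. Then $C_A$ is invariant under translation by every element of the subgroup $K(L_0)\cap A[2]$, which is isomorphic to the Klein group $\mathbb{Z}_2\times\mathbb{Z}_2$.
   Context: $K(L_0)$ is the kernel of the isogeny $\phi_{L_0}:A\to\widehat{A}$, $a\mapsto t_a^*L_0\otimes L_0^{-1}$; $A[2]$ is the group of $2$-torsion points. Classical theta functions: $\theta\begin{bmatrix}c_1\\c_2\end{bmatrix}(v,Z)=\sum_{l\in\mathbb{Z}^2}\exp\big(\pi i\,{}^t(l+c_1)Z(l+c_1)+2\pi i\,{}^t(l+c_1)(v+c_2)\big)$. *)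

From Stdlib Require Import Reals ZArith.
From Coquelicot Require Import Coquelicot.
Local Open Scope R_scope.
Local Open Scope C_scope.

(* A symmetric 2x2 complex matrix  Z = [[a, b], [b, c]]  and points of C^2
   (as pairs).  Z lies in the Siegel upper half space h_2 iff it is
   symmetric (built in) and Im Z is positive definite. *)
Definition siegel2 (a b c : C) : Prop :=
  (0 < Im a)%R /\ (0 < Im a * Im c - Im b * Im b)%R.

Definition cexp (z : C) : C :=
  ((exp (Re z) * cos (Im z))%R, (exp (Re z) * sin (Im z))%R).

Definition theta_term (a b c : C) (c1 c2 : R * R) (v : C * C) (l : Z * Z) : C :=
  let u1 : C := RtoC (IZR (fst l) + fst c1)%R in
  let u2 : C := RtoC (IZR (snd l) + snd c1)%R in
  cexp (RtoC PI * Ci * (u1 * (a * u1 + b * u2) + u2 * (b * u1 + c * u2))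
        + RtoC (2 * PI) * Ci * (u1 * (fst v + RtoC (fst c2))
                                + u2 * (snd v + RtoC (snd c2)))).

Definition theta_partial (a b c : C) (c1 c2 : R * R) (v : C * C) (N : nat) : C :=
  sum_n (fun i : nat =>
    sum_n (fun j : nat =>
      theta_term a b c c1 c2 v
        ((Z.of_nat i - Z.of_nat N)%Z, (Z.of_nat j - Z.of_nat N)%Z)) (2 * N)) (2 * N).

(* classical theta function with characteristic: limit of the (absolutely
   convergent) series, taken along square boxes *)
Definition theta (a b c : C) (c1 c2 : R * R) (v : C * C) : C :=
  (real (Lim_seq (fun N => Re (theta_partial a b c c1 c2 v N))),
   real (Lim_seq (fun N => Im (theta_partial a b c c1 c2 v N)))).

Definition omega : R * R := (0%R, (1/4)%R).

Definition theta_A (a b c : C) (v : C * C) : C :=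
  theta a b c ((3 * fst omega)%R, (3 * snd omega)%R) (0%R, 0%R) v
  - theta a b c omega (0%R, 0%R) v.

(* C_A = { theta_A = 0 }, as a (Lambda-invariant) subset of C^2 *)
Definition C_A (a b c : C) (v : C * C) : Prop := theta_A a b c v = 0.

Definition in_lattice (a b c : C) (v : C * C) : Prop :=
  exists n1 n2 m1 m2 : Z,
    v = (a * IZR n1 + b * IZR n2 + IZR m1,
         b * IZR n1 + c * IZR n2 + 4 * IZR m2).

Definition vadd (v w : C * C) : C * C := (fst v + fst w, snd v + snd w).
Definition vsub (v w : C * C) : C * C := (fst v - fst w, snd v - snd w).
Definition vscal (k : C) (v : C * C) : C * C := (k * fst v, k * snd v).

(* First Chern class of L_0: E = Im H with H(v,w) = v^T (Im Z)^{-1} conj(w).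
   In the coordinates C^2 = Z R^2 + R^2 this is
   E(Z x1 + y1, Z x2 + y2) = x1.y2 - y1.x2, of type diag(1,4) on Lambda. *)
Definition E_L0 (a b c : C) (v w : C * C) : R :=
  let p := Im a in let q := Im b in let r := Im c in
  let d := (p * r - q * q)%R in
  let w1 := Cconj (fst w) in let w2 := Cconj (snd w) in
  Im ((fst v * (RtoC (r / d) * w1 + RtoC (- q / d) * w2)
     + snd v * (RtoC (- q / d) * w1 + RtoC (p / d) * w2))).

(* K(L_0) = Lambda(L_0)/Lambda, Lambda(L_0) = { v | E(v, Lambda) in Z };
   represented by its (Lambda-saturated) preimage in C^2 *)
Definition in_K_L0 (a b c : C) (v : C * C) : Prop :=
  forall l, in_lattice a b c l -> exists k : Z, E_L0 a b c v l = IZR k.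

Definition in_A2 (a b c : C) (v : C * C) : Prop :=
  in_lattice a b c (vscal 2 v).

Definition in_K_cap_A2 (a b c : C) (v : C * C) : Prop :=
  in_K_L0 a b c v /\ in_A2 a b c v.

(* The subgroup (K(L_0) cap A[2]) of A = C^2/Lambda is isomorphic to the
   Klein group Z_2 x Z_2 = (bool * bool, componentwise xor):
   f is a group isomorphism onto the subgroup, modulo Lambda. *)
Definition klein_iso (a b c : C) (f : bool * bool -> C * C) : Prop :=
  (forall x, in_K_cap_A2 a b c (f x)) /\
  (forall x y, in_lattice a b c
      (vsub (f (xorb (fst x) (fst y), xorb (snd x) (snd y))) (vadd (f x) (f y)))) /\
  (forall x y, in_lattice a b c (vsub (f x) (f y)) -> x = y) /\
  (forall v, in_K_cap_A2 a b c v -> exists x, in_lattice a b c (vsub v (f x))).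

From Stdlib Require Import Reals ZArith Lra Lia.
From Coquelicot Require Import Coquelicot.

Local Open Scope R_scope.

(* The theta series converges absolutely (the terms decay like
   [2^-|l1| 2^-|l2|]), so its limit along square boxes is unchanged when the
   summation index is shifted.  This gives the classical transformation rules:
   integral shifts of the characteristic [c1] do nothing, translation by an
   integral vector [n] multiplies [theta[c1;c2]] by [e(c1 . n)], and translation
   by [Z x] multiplies it by a nowhere-vanishing exponential independent of [c1]
   while moving [c1] to [c1 + x].
   Modulo [Lambda], [K(L_0) ∩ A[2]] consists of the four classes of
   [Z (0, e1/2) + (0, 2 e2)], [e1, e2 ∈ {0, 1}], with addition given by xor.
   Translations by [Lambda] and by [(0, 2)] multiply both theta functions in
   [theta_A] by the same unit, and [Z (0, 1/2)] swaps the characteristics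
   [(0, 1/4)] and [(0, 3/4)], so [theta_A] is multiplied by a unit and its zero
   set [C_A] is invariant. *)

(** * Symmetric sums over [Z] and [Z^2] *)

(* The sum over [[-N, N]], written with [sum_n] as in [theta_partial] so that
   [theta_box_lim] holds by conversion. *)
Definition zsum (h : Z -> C) (N : nat) : C :=
  sum_n (fun i => h (Z.of_nat i - Z.of_nat N)%Z) (2 * N).

Lemma zsum_O (h : Z -> C) : zsum h 0 = h 0%Z.
Proof. unfold zsum; simpl. now rewrite sum_O. Qed.

Lemma zsum_S (h : Z -> C) (N : nat) :
  zsum h (S N) = (zsum h N + h (Z.of_nat (S N)) + h (- Z.of_nat (S N))%Z)%C.
Proof.
  unfold zsum, sum_n.
  replace (2 * S N)%nat with (S (S (2 * N))) by lia.
  rewrite sum_Sn_m, sum_n_Sm, <- sum_n_m_S by lia.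
  rewrite (sum_n_m_ext _ (fun i => h (Z.of_nat i - Z.of_nat N)%Z))
    by (intros i; f_equal; lia).
  replace (Z.of_nat (S (S (2 * N))) - Z.of_nat (S N))%Z with (Z.of_nat (S N)) by lia.
  replace (Z.of_nat 0 - Z.of_nat (S N))%Z with (- Z.of_nat (S N))%Z by lia.
  change plus with Cplus. ring.
Qed.

Lemma zsum_ext (h1 h2 : Z -> C) (N : nat) :
  (forall l, h1 l = h2 l) -> zsum h1 N = zsum h2 N.
Proof. intros H; unfold zsum; apply sum_n_ext; intros; apply H. Qed.

Lemma zsum_plus (h1 h2 : Z -> C) (N : nat) :
  zsum (fun l => h1 l + h2 l)%C N = (zsum h1 N + zsum h2 N)%C.
Proof. induction N; [rewrite !zsum_O | rewrite !zsum_S, IHN]; ring. Qed.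

Lemma zsum_scal (k : C) (h : Z -> C) (N : nat) :
  zsum (fun l => k * h l)%C N = (k * zsum h N)%C.
Proof. induction N; [rewrite !zsum_O | rewrite !zsum_S, IHN]; ring. Qed.

Lemma zsum_shift (h : Z -> C) (N : nat) :
  zsum (fun l => h (l + 1)%Z) N
  = (zsum h N - h (- Z.of_nat N)%Z + h (Z.of_nat N + 1)%Z)%C.
Proof.
  induction N as [|N IHN].
  - rewrite !zsum_O; simpl; ring.
  - rewrite !zsum_S, IHN.
    replace (- Z.of_nat (S N) + 1)%Z with (- Z.of_nat N)%Z by lia.
    replace (Z.of_nat N + 1)%Z with (Z.of_nat (S N)) by lia.
    ring.
Qed.

Lemma zsum_exchange (f : Z -> Z -> C) (M N : nat) :
  zsum (fun i => zsum (f i) N) M = zsum (fun j => zsum (fun i => f i j) M) N.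
Proof.
  induction M as [|M IHM].
  - rewrite zsum_O. apply zsum_ext; intros; now rewrite zsum_O.
  - rewrite zsum_S, IHM, (zsum_ext (fun j => zsum (fun i => f i j) (S M))
      (fun j => zsum (fun i => f i j) M + f (Z.of_nat (S M)) j + f (- Z.of_nat (S M))%Z j)%C)
      by (intros; apply zsum_S).
    now rewrite !zsum_plus.
Qed.

Definition decay (l : Z) : R := (/ 2) ^ Z.abs_nat l.

Lemma decay_of_nat (n : nat) : decay (Z.of_nat n) = (/ 2) ^ n.
Proof. unfold decay; now rewrite Zabs2Nat.id. Qed.

Lemma decay_opp_of_nat (n : nat) : decay (- Z.of_nat n)%Z = (/ 2) ^ n.
Proof. unfold decay; f_equal; lia. Qed.

Lemma Cmod_zsum_le (h : Z -> C) (c : R) (N : nat) :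
  (forall l, Cmod (h l) <= c * decay l) -> Cmod (zsum h N) <= 3 * c.
Proof.
  intros Hh.
  assert (Hc : 0 <= c).
  { specialize (Hh 0%Z); unfold decay in Hh; simpl in Hh.
    pose proof (Cmod_ge_0 (h 0%Z)); lra. }
  enough (Cmod (zsum h N) <= c * (3 - 2 * (/ 2) ^ N))
    by (pose proof (pow_le (/ 2) N); nra).
  induction N as [|N IHN].
  - rewrite zsum_O. specialize (Hh 0%Z). unfold decay in Hh; simpl in *. lra.
  - rewrite zsum_S.
    pose proof (Hh (Z.of_nat (S N))) as H1; pose proof (Hh (- Z.of_nat (S N))%Z) as H2.
    rewrite decay_of_nat in H1; rewrite decay_opp_of_nat in H2.
    pose proof (Cmod_triangle (zsum h N + h (Z.of_nat (S N))) (h (- Z.of_nat (S N))%Z)).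
    pose proof (Cmod_triangle (zsum h N) (h (Z.of_nat (S N)))).
    simpl pow in *. nra.
Qed.

Definition box (f : Z -> Z -> C) (N : nat) : C := zsum (fun l1 => zsum (f l1) N) N.

Lemma box_ext (f g : Z -> Z -> C) (N : nat) :
  (forall l1 l2, f l1 l2 = g l1 l2) -> box f N = box g N.
Proof. intros H; apply zsum_ext; intros; apply zsum_ext; intros; apply H. Qed.

Lemma box_S (f : Z -> Z -> C) (N : nat) :
  box f (S N) = (box f N
    + zsum (fun l1 => f l1 (Z.of_nat (S N)) + f l1 (- Z.of_nat (S N))%Z) (S N)
    + zsum (f (Z.of_nat (S N))) N + zsum (f (- Z.of_nat (S N))%Z) N)%C.
Proof.
  unfold box.
  rewrite (zsum_ext (fun l1 => zsum (f l1) (S N)) (fun l1 => zsum (f l1) N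
      + (f l1 (Z.of_nat (S N)) + f l1 (- Z.of_nat (S N))%Z))%C)
    by (intros; rewrite zsum_S; ring).
  rewrite zsum_plus, (zsum_S (fun l1 => zsum (f l1) N)). ring.
Qed.

Definition dominated_by (f : Z -> Z -> C) (K : R) : Prop :=
  forall l1 l2, Cmod (f l1 l2) <= K * decay l1 * decay l2.

Definition dominated (f : Z -> Z -> C) : Prop := exists K, dominated_by f K.

Lemma dominated_swap (f : Z -> Z -> C) :
  dominated f -> dominated (fun l1 l2 => f l2 l1).
Proof.
  intros [K HK]; exists K; intros l1 l2.
  replace (K * decay l1 * decay l2) with (K * decay l2 * decay l1) by ring; apply HK.
Qed.

Lemma dominated_const_ge0 (f : Z -> Z -> C) (K : R) :
  dominated_by f K -> 0 <= K.
Proof.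
  intros HK; specialize (HK 0%Z 0%Z); unfold decay in HK; simpl in HK.
  pose proof (Cmod_ge_0 (f 0%Z 0%Z)); lra.
Qed.

Lemma Cmod_box_S_sub (f : Z -> Z -> C) (K : R) (N : nat) :
  dominated_by f K ->
  Cmod (box f (S N) - box f N)%C <= 6 * K * (/ 2) ^ N.
Proof.
  intros HK; pose proof (dominated_const_ge0 f K HK) as HK0.
  assert (Hcol : Cmod (zsum (fun l1 => f l1 (Z.of_nat (S N)) + f l1 (- Z.of_nat (S N))%Z)%C (S N))
                 <= 3 * (2 * K * (/ 2) ^ S N)).
  { apply Cmod_zsum_le; intros l.
    eapply Rle_trans; [apply Cmod_triangle|].
    pose proof (HK l (Z.of_nat (S N))); pose proof (HK l (- Z.of_nat (S N))%Z).
    rewrite decay_of_nat in *; rewrite decay_opp_of_nat in *. lra. }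
  assert (Hrow : forall l1, decay l1 = (/ 2) ^ S N ->
                 Cmod (zsum (f l1) N) <= 3 * (K * (/ 2) ^ S N)).
  { intros l1 Hl1; apply Cmod_zsum_le; intros l2; rewrite <- Hl1; apply HK. }
  rewrite box_S.
  replace (box f N + _ + _ + _ - box f N)%C
    with (zsum (fun l1 => f l1 (Z.of_nat (S N)) + f l1 (- Z.of_nat (S N))%Z)%C (S N)
          + zsum (f (Z.of_nat (S N))) N + zsum (f (- Z.of_nat (S N))%Z) N)%C by ring.
  pose proof (Hrow _ (decay_of_nat (S N))); pose proof (Hrow _ (decay_opp_of_nat (S N))).
  eapply Rle_trans; [apply Cmod_triangle|].
  eapply Rle_trans; [apply Rplus_le_compat_r, Cmod_triangle|].
  simpl pow in *. lra.
Qed.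

Lemma Cmod_box_sub (f : Z -> Z -> C) (K : R) (m k : nat) :
  dominated_by f K ->
  Cmod (box f (k + m) - box f m)%C <= 12 * K * (/ 2) ^ m.
Proof.
  intros HK; pose proof (dominated_const_ge0 f K HK) as HK0.
  enough (Cmod (box f (k + m) - box f m)%C <= 12 * K * ((/ 2) ^ m - (/ 2) ^ (k + m)))
    by (pose proof (pow_le (/ 2) (k + m)); nra).
  induction k as [|k IHk].
  - simpl. replace (box f m - box f m)%C with (RtoC 0) by ring. rewrite Cmod_0. lra.
  - replace (box f (S k + m) - box f m)%C
      with ((box f (S (k + m)) - box f (k + m)) + (box f (k + m) - box f m))%C by (simpl; ring).
    eapply Rle_trans; [apply Cmod_triangle|].
    pose proof (Cmod_box_S_sub f K (k + m) HK).
    simpl pow. nra.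
Qed.

(** * Limits of complex sequences and of square partial sums *)

Definition lim_C (u : nat -> C) : C :=
  (real (Lim_seq (fun n => Re (u n))), real (Lim_seq (fun n => Im (u n)))).

Definition is_lim_C (u : nat -> C) (x : C) : Prop :=
  is_lim_seq (fun n => Re (u n)) (Re x) /\ is_lim_seq (fun n => Im (u n)) (Im x).

Lemma Im_le_Cmod (z : C) : Rabs (Im z) <= Cmod z.
Proof.
  pose proof (Rmax_Cmod z); pose proof (Rmax_r (Rabs (fst z)) (Rabs (snd z))).
  unfold Im; lra.
Qed.

Lemma lim_C_ext (u v : nat -> C) : (forall n, u n = v n) -> lim_C u = lim_C v.
Proof. intros H; unfold lim_C; do 2 f_equal; apply Lim_seq_ext; intros; now rewrite H. Qed.

Lemma is_lim_C_unique (u : nat -> C) (x : C) : is_lim_C u x -> lim_C u = x.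
Proof.
  intros [H1 H2]; unfold lim_C.
  rewrite (is_lim_seq_unique _ _ H1), (is_lim_seq_unique _ _ H2). now destruct x.
Qed.

Lemma is_lim_C_scal (u : nat -> C) (x k : C) :
  is_lim_C u x -> is_lim_C (fun n => k * u n)%C (k * x)%C.
Proof.
  intros [H1 H2]; split.
  - apply (is_lim_seq_ext (fun n => Re k * Re (u n) + - Im k * Im (u n)));
      [intros n; destruct k, (u n); simpl; ring|].
    replace (Re (k * x)%C) with (Re k * Re x + - Im k * Im x) by (destruct k, x; simpl; ring).
    apply is_lim_seq_plus'; [apply (is_lim_seq_scal_l _ _ (Finite _)) ..]; assumption.
  - apply (is_lim_seq_ext (fun n => Re k * Im (u n) + Im k * Re (u n)));
      [intros n; destruct k, (u n); simpl; ring|].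
    replace (Im (k * x)%C) with (Re k * Im x + Im k * Re x) by (destruct k, x; simpl; ring).
    apply is_lim_seq_plus'; [apply (is_lim_seq_scal_l _ _ (Finite _)) ..]; assumption.
Qed.

Lemma ex_finite_lim_seq_geom_cauchy (u : nat -> R) (B : R) :
  (forall m k, Rabs (u (k + m)%nat - u m) <= B * (/ 2) ^ m) -> ex_finite_lim_seq u.
Proof.
  intros Hu; apply ex_lim_seq_cauchy_corr; intros eps.
  assert (HB : 0 <= B).
  { specialize (Hu 0%nat 0%nat); simpl in Hu.
    rewrite Rminus_diag, Rabs_R0 in Hu; lra. }
  destruct (pow_lt_1_zero (/ 2) ltac:(rewrite Rabs_pos_eq; lra) (eps / (B + 1)))
    as [N HN]; [apply Rdiv_lt_0_compat; [apply cond_pos | lra]|].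
  assert (Hsmall : forall m, (N <= m)%nat -> B * (/ 2) ^ m < eps).
  { intros m Hm; specialize (HN m Hm).
    rewrite Rabs_pos_eq in HN by (apply pow_le; lra).
    apply Rmult_lt_compat_l with (r := B + 1) in HN; [|lra].
    replace ((B + 1) * (eps / (B + 1))) with (pos eps) in HN by (field; lra).
    pose proof (pow_le (/ 2) m); nra. }
  exists N; intros n m Hn Hm.
  destruct (le_ge_dec m n) as [Hmn | Hmn].
  - replace n with ((n - m) + m)%nat by lia.
    eapply Rle_lt_trans; [apply Hu | now apply Hsmall].
  - rewrite Rabs_minus_sym; replace m with ((m - n) + n)%nat by lia.
    eapply Rle_lt_trans; [apply Hu | now apply Hsmall].
Qed.

Lemma is_lim_C_geom_cauchy (u : nat -> C) (B : R) :
  (forall m k, Cmod (u (k + m)%nat - u m)%C <= B * (/ 2) ^ m) -> is_lim_C u (lim_C u).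
Proof.
  intros Hu; split; apply Lim_seq_correct'; apply (ex_finite_lim_seq_geom_cauchy _ B);
    intros m k.
  - eapply Rle_trans; [apply (re_le_Cmod (u (k + m)%nat - u m)%C) | apply Hu].
  - eapply Rle_trans; [apply (Im_le_Cmod (u (k + m)%nat - u m)%C) | apply Hu].
Qed.

Lemma is_lim_seq_geom_perturb (u v : nat -> R) (l B : R) :
  is_lim_seq u l -> (forall n, Rabs (v n - u n) <= B * (/ 2) ^ n) -> is_lim_seq v l.
Proof.
  intros Hu Hvu.
  assert (Hgeom : is_lim_seq (fun n => B * (/ 2) ^ n) 0).
  { replace 0 with (B * 0) by ring.
    apply (is_lim_seq_scal_l _ _ (Finite 0)), is_lim_seq_geom.
    rewrite Rabs_pos_eq; lra. }
  apply (is_lim_seq_ext (fun n => u n + (v n - u n))); [intros; ring|].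
  replace l with (l + 0) by ring; apply is_lim_seq_plus'; [assumption|].
  apply (is_lim_seq_le_le (fun n => - (B * (/ 2) ^ n)) _ (fun n => B * (/ 2) ^ n)).
  - intros n; apply Rabs_le_between, Hvu.
  - replace 0 with (- 0) by ring; apply (is_lim_seq_opp _ (Finite 0)), Hgeom.
  - exact Hgeom.
Qed.

Lemma is_lim_C_geom_perturb (u v : nat -> C) (x : C) (B : R) :
  is_lim_C u x -> (forall n, Cmod (v n - u n)%C <= B * (/ 2) ^ n) -> is_lim_C v x.
Proof.
  intros [H1 H2] Hvu; split.
  - apply (is_lim_seq_geom_perturb _ _ _ B H1); intros n.
    eapply Rle_trans; [apply (re_le_Cmod (v n - u n)%C) | apply Hvu].
  - apply (is_lim_seq_geom_perturb _ _ _ B H2); intros n.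
    eapply Rle_trans; [apply (Im_le_Cmod (v n - u n)%C) | apply Hvu].
Qed.

Definition box_lim (f : Z -> Z -> C) : C := lim_C (box f).

Lemma is_lim_box (f : Z -> Z -> C) : dominated f -> is_lim_C (box f) (box_lim f).
Proof.
  intros [K HK]; apply (is_lim_C_geom_cauchy _ (12 * K)); intros m k.
  now apply Cmod_box_sub.
Qed.

Lemma box_lim_ext (f g : Z -> Z -> C) :
  (forall l1 l2, f l1 l2 = g l1 l2) -> box_lim f = box_lim g.
Proof. intros H; apply lim_C_ext; intros; now apply box_ext. Qed.

Lemma box_lim_scal (f : Z -> Z -> C) (k : C) :
  dominated f -> box_lim (fun l1 l2 => k * f l1 l2)%C = (k * box_lim f)%C.
Proof.
  intros Hf; unfold box_lim at 1.
  rewrite (lim_C_ext _ (fun N => k * box f N)%C).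
  - now apply is_lim_C_unique, is_lim_C_scal, is_lim_box.
  - intros N; unfold box; rewrite <- zsum_scal.
    apply zsum_ext; intros; apply zsum_scal.
Qed.

Lemma box_lim_swap (f : Z -> Z -> C) : box_lim (fun l1 l2 => f l2 l1) = box_lim f.
Proof. apply lim_C_ext; intros N; exact (zsum_exchange (fun l1 l2 => f l2 l1) N N). Qed.

(* Moving the box by one step only trades a row at distance [N] for one at
   distance [N + 1], both of size [O(2^-N)]. *)
Lemma box_lim_shift_l (f : Z -> Z -> C) :
  dominated f -> box_lim (fun l1 l2 => f (l1 + 1)%Z l2) = box_lim f.
Proof.
  intros Hf; pose proof Hf as [K HK]; pose proof (dominated_const_ge0 f K HK).
  apply is_lim_C_unique, (is_lim_C_geom_perturb (box f) _ _ (6 * K));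
    [now apply is_lim_box|].
  intros N.
  assert (E : box (fun l1 l2 => f (l1 + 1)%Z l2) N
    = (box f N - zsum (f (- Z.of_nat N)%Z) N + zsum (f (Z.of_nat N + 1)%Z) N)%C)
    by exact (zsum_shift (fun l1 => zsum (f l1) N) N).
  rewrite E; replace (Z.of_nat N + 1)%Z with (Z.of_nat (S N)) by lia.
  replace (box f N - _ + _ - box f N)%C
    with (zsum (f (Z.of_nat (S N))) N + - zsum (f (- Z.of_nat N)%Z) N)%C by ring.
  eapply Rle_trans; [apply Cmod_triangle|]; rewrite Cmod_opp.
  assert (Hrow : forall n l1, decay l1 = (/ 2) ^ n -> Cmod (zsum (f l1) N) <= 3 * (K * (/ 2) ^ n))
    by (intros n l1 Hl1; apply Cmod_zsum_le; intros l2; rewrite <- Hl1; apply HK).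
  pose proof (Hrow _ _ (decay_of_nat (S N))); pose proof (Hrow _ _ (decay_opp_of_nat N)).
  simpl pow in *. pose proof (pow_le (/ 2) N). nra.
Qed.

Lemma box_lim_shift_r (f : Z -> Z -> C) :
  dominated f -> box_lim (fun l1 l2 => f l1 (l2 + 1)%Z) = box_lim f.
Proof.
  intros Hf; rewrite <- box_lim_swap, <- (box_lim_swap f).
  exact (box_lim_shift_l (fun l1 l2 => f l2 l1) (dominated_swap f Hf)).
Qed.

(** * Theta functions with characteristics *)

Lemma Z_periodic {A : Type} (F : R -> A) :
  (forall x, F (x + 1) = F x) -> forall (k : Z) (x : R), F (x + IZR k) = F x.
Proof.
  intros HF k; induction k as [|k IHk|k IHk] using Z.peano_ind; intros x.
  - now rewrite Rplus_0_r.
  - rewrite succ_IZR, <- Rplus_assoc, HF; apply IHk.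
  - rewrite <- (IHk x), <- (HF (x + IZR (Z.pred k))).
    f_equal; rewrite <- Z.sub_1_r, minus_IZR; ring.
Qed.

Lemma Cmod_cexp (z : C) : Cmod (cexp z) = exp (Re z).
Proof.
  unfold Cmod, cexp; cbn [fst snd].
  replace ((exp (Re z) * cos (Im z)) ^ 2 + (exp (Re z) * sin (Im z)) ^ 2)
    with (exp (Re z) ^ 2 * ((sin (Im z))² + (cos (Im z))²)) by (unfold Rsqr; ring).
  rewrite sin2_cos2, Rmult_1_r; apply sqrt_pow2; left; apply exp_pos.
Qed.

Lemma cexp_add (x y : C) : cexp (x + y) = (cexp x * cexp y)%C.
Proof.
  destruct x as [x1 x2], y as [y1 y2]; unfold cexp; simpl.
  rewrite exp_plus, cos_plus, sin_plus; apply injective_projections; simpl; ring.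
Qed.

Lemma cexp_neq0 (z : C) : cexp z <> 0%C.
Proof.
  intros H; pose proof (exp_pos (Re z)) as Hpos.
  rewrite <- Cmod_cexp, H, Cmod_0 in Hpos; lra.
Qed.

Lemma cexp_2PI_i (t : R) :
  cexp (RtoC (2 * PI) * Ci * RtoC t) = (cos (2 * PI * t), sin (2 * PI * t)).
Proof.
  unfold cexp; cbn.
  replace ((2 * PI * 0 - 0 * 1) * t - (2 * PI * 1 + 0 * 0) * 0) with 0 by ring.
  replace ((2 * PI * 0 - 0 * 1) * 0 + (2 * PI * 1 + 0 * 0) * t) with (2 * PI * t) by ring.
  now rewrite exp_0, !Rmult_1_l.
Qed.

Lemma cexp_2PI_i_periodic (t : R) (k : Z) :
  cexp (RtoC (2 * PI) * Ci * RtoC (t + IZR k)) = cexp (RtoC (2 * PI) * Ci * RtoC t).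
Proof.
  rewrite !cexp_2PI_i.
  apply (Z_periodic (fun t => (cos (2 * PI * t), sin (2 * PI * t)))); intros x.
  replace (2 * PI * (x + 1)) with (2 * PI * x + 2 * PI) by ring.
  rewrite cos_plus, sin_plus, cos_2PI, sin_2PI; f_equal; ring.
Qed.

Lemma cexp_2PI_i_int (k : Z) : cexp (RtoC (2 * PI) * Ci * RtoC (IZR k)) = 1%C.
Proof.
  rewrite <- (Rplus_0_l (IZR k)), cexp_2PI_i_periodic, cexp_2PI_i.
  rewrite Rmult_0_r, cos_0, sin_0; reflexivity.
Qed.

Lemma theta_box_lim (a b c : C) (c1 c2 : R * R) (v : C * C) :
  theta a b c c1 c2 v = box_lim (fun l1 l2 => theta_term a b c c1 c2 v (l1, l2)).
Proof. reflexivity. Qed.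

Lemma Cmod_theta_term (a b c : C) (c1 c2 : R * R) (v : C * C) (l : Z * Z) :
  let u1 := IZR (fst l) + fst c1 in
  let u2 := IZR (snd l) + snd c1 in
  Cmod (theta_term a b c c1 c2 v l)
  = exp (- PI * (Im a * u1 ^ 2 + 2 * Im b * u1 * u2 + Im c * u2 ^ 2)
         - 2 * PI * (u1 * Im (fst v) + u2 * Im (snd v))).
Proof.
  intros u1 u2; unfold theta_term; rewrite Cmod_cexp; f_equal.
  destruct a, b, c, v as [[] []], c2; simpl; fold u1 u2; ring.
Qed.

Lemma siegel2_Im_coercive (a b c : C) :
  siegel2 a b c -> exists lam, 0 < lam /\ forall u1 u2,
    lam * (u1 ^ 2 + u2 ^ 2) <= Im a * u1 ^ 2 + 2 * Im b * u1 * u2 + Im c * u2 ^ 2.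
Proof.
  intros [Hp Hd]; set (p := Im a) in *; set (q := Im b) in *; set (r := Im c) in *.
  assert (Hr : 0 < r) by nra.
  exists ((p * r - q * q) / (p + r)); split; [apply Rdiv_lt_0_compat; lra|].
  intros u1 u2; apply (Rmult_le_reg_l (p + r)); [lra|].
  (* [(p + r) Q(u) - det(Im Z) |u|^2] is a sum of two squares *)
  replace ((p + r) * ((p * r - q * q) / (p + r) * (u1 ^ 2 + u2 ^ 2)))
    with ((p + r) * (p * u1 ^ 2 + 2 * q * u1 * u2 + r * u2 ^ 2)
          - ((p * u1 + q * u2) ^ 2 + (q * u1 + r * u2) ^ 2)) by (field; lra).
  pose proof (pow2_ge_0 (p * u1 + q * u2)); pose proof (pow2_ge_0 (q * u1 + r * u2)); lra.
Qed.

Lemma gaussian_decay_bound (A B s : R) :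
  0 < A -> exists C, forall l : Z,
    - A * (IZR l + s) ^ 2 + B * (IZR l + s) <= C - INR (Z.abs_nat l).
Proof.
  intros HA; exists ((Rabs B + 1) ^ 2 / (4 * A) + Rabs s); intros l.
  set (u := IZR l + s).
  assert (Hl : INR (Z.abs_nat l) <= Rabs u + Rabs s).
  { rewrite INR_IZR_INZ, Zabs2Nat.id_abs, abs_IZR.
    replace (IZR l) with (u + - s) by (unfold u; ring).
    rewrite <- (Rabs_Ropp s); apply Rabs_triang. }
  assert (HB : B * u <= Rabs B * Rabs u)
    by (rewrite <- Rabs_mult; apply Rle_abs).
  (* complete the square: [- A t^2 + D t <= D^2 / 4A] *)
  assert (Hsq : - A * Rabs u ^ 2 + (Rabs B + 1) * Rabs u <= (Rabs B + 1) ^ 2 / (4 * A)).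
  { assert (0 <= (2 * A * Rabs u - (Rabs B + 1)) ^ 2) by apply pow2_ge_0.
    apply (Rmult_le_reg_l (4 * A)); [lra|].
    replace (4 * A * ((Rabs B + 1) ^ 2 / (4 * A))) with ((Rabs B + 1) ^ 2) by (field; lra).
    nra. }
  rewrite <- (pow2_abs u) in *; lra.
Qed.

Lemma exp_neg_INR_le (n : nat) : exp (- INR n) <= (/ 2) ^ n.
Proof.
  assert (He : exp (- (1)) <= / 2).
  { rewrite exp_Ropp; apply Rinv_le_contravar; [lra|].
    pose proof (exp_ineq1_le 1); lra. }
  induction n as [|n IHn].
  - simpl; rewrite Ropp_0, exp_0; lra.
  - rewrite S_INR, Ropp_plus_distr, exp_plus; simpl pow.
    rewrite Rmult_comm; apply Rmult_le_compat; try (left; apply exp_pos); assumption.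
Qed.

Lemma exp_le_compat (x y : R) : x <= y -> exp x <= exp y.
Proof. intros [H | ->]; [left; now apply exp_increasing | now right]. Qed.

Lemma theta_term_dominated (a b c : C) (c1 c2 : R * R) (v : C * C) :
  siegel2 a b c -> dominated (fun l1 l2 => theta_term a b c c1 c2 v (l1, l2)).
Proof.
  intros HZ; destruct (siegel2_Im_coercive a b c HZ) as [lam [Hlam HQ]].
  assert (HA : 0 < PI * lam) by (pose proof PI_RGT_0; nra).
  destruct (gaussian_decay_bound (PI * lam) (- 2 * PI * Im (fst v)) (fst c1) HA) as [C1 H1].
  destruct (gaussian_decay_bound (PI * lam) (- 2 * PI * Im (snd v)) (snd c1) HA) as [C2 H2].
  exists (exp (C1 + C2)); intros l1 l2.
  rewrite Cmod_theta_term; cbn [fst snd].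
  specialize (H1 l1); specialize (H2 l2).
  set (u1 := IZR l1 + fst c1) in *; set (u2 := IZR l2 + snd c1) in *.
  eapply Rle_trans; [apply exp_le_compat|].
  - apply Rle_trans with ((C1 - INR (Z.abs_nat l1)) + (C2 - INR (Z.abs_nat l2))); [|apply Rle_refl].
    pose proof (Rmult_le_compat_l PI _ _ (Rlt_le _ _ PI_RGT_0) (HQ u1 u2)); lra.
  - unfold decay.
    replace (C1 - INR (Z.abs_nat l1) + (C2 - INR (Z.abs_nat l2)))
      with (C1 + C2 + - INR (Z.abs_nat l1) + - INR (Z.abs_nat l2)) by ring.
    rewrite 2!exp_plus.
    pose proof (exp_pos (C1 + C2)); pose proof (exp_pos (- INR (Z.abs_nat l1))).
    apply Rmult_le_compat; [apply Rmult_le_pos; lra | left; apply exp_pos | | apply exp_neg_INR_le].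
    apply Rmult_le_compat_l; [lra | apply exp_neg_INR_le].
Qed.

Lemma theta_char_shift (a b c : C) (c2 : R * R) (v : C * C) (x1 x2 : R) (k1 k2 : Z) :
  siegel2 a b c -> theta a b c (x1 + IZR k1, x2 + IZR k2) c2 v = theta a b c (x1, x2) c2 v.
Proof.
  intros HZ.
  assert (H1 : forall y1 y2, theta a b c (y1 + 1, y2) c2 v = theta a b c (y1, y2) c2 v).
  { intros y1 y2; rewrite !theta_box_lim, <- (box_lim_shift_l
      (fun l1 l2 => theta_term a b c (y1, y2) c2 v (l1, l2))) by now apply theta_term_dominated.
    apply box_lim_ext; intros l1 l2; unfold theta_term; cbn [fst snd].
    replace (IZR l1 + (y1 + 1)) with (IZR (l1 + 1) + y1) by (rewrite plus_IZR; ring).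
    reflexivity. }
  assert (H2 : forall y1 y2, theta a b c (y1, y2 + 1) c2 v = theta a b c (y1, y2) c2 v).
  { intros y1 y2; rewrite !theta_box_lim, <- (box_lim_shift_r
      (fun l1 l2 => theta_term a b c (y1, y2) c2 v (l1, l2))) by now apply theta_term_dominated.
    apply box_lim_ext; intros l1 l2; unfold theta_term; cbn [fst snd].
    replace (IZR l2 + (y2 + 1)) with (IZR (l2 + 1) + y2) by (rewrite plus_IZR; ring).
    reflexivity. }
  transitivity (theta a b c (x1, x2 + IZR k2) c2 v).
  - exact (Z_periodic (fun t => theta a b c (t, x2 + IZR k2) c2 v) (fun t => H1 t _) k1 x1).
  - exact (Z_periodic (fun t => theta a b c (x1, t) c2 v) (H2 x1) k2 x2).
Qed.

Lemma theta_translate_int (a b c : C) (c1 c2 : R * R) (v : C * C) (n1 n2 : Z) :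
  siegel2 a b c ->
  theta a b c c1 c2 (vadd v (RtoC (IZR n1), RtoC (IZR n2)))
  = (cexp (RtoC (2 * PI) * Ci * RtoC (fst c1 * IZR n1 + snd c1 * IZR n2))
     * theta a b c c1 c2 v)%C.
Proof.
  intros HZ; rewrite !theta_box_lim, <- box_lim_scal by now apply theta_term_dominated.
  apply box_lim_ext; intros l1 l2.
  rewrite <- (Cmult_1_l (theta_term _ _ _ _ _ (vadd _ _) _)),
    <- (cexp_2PI_i_int (- (l1 * n1 + l2 * n2))).
  unfold theta_term, vadd; rewrite <- !cexp_add; f_equal; cbn [fst snd].
  rewrite opp_IZR, plus_IZR, !mult_IZR, !RtoC_opp, !RtoC_plus, !RtoC_mult; ring.
Qed.

Definition Zx (a b c : C) (x1 x2 : R) : C * C :=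
  (a * RtoC x1 + b * RtoC x2, b * RtoC x1 + c * RtoC x2)%C.

Lemma theta_translate_period (a b c : C) (c1 c2 : R * R) (v : C * C) (x1 x2 : R) :
  siegel2 a b c ->
  theta a b c c1 c2 (vadd v (Zx a b c x1 x2))
  = (cexp (- (RtoC PI * Ci * (RtoC x1 * (a * RtoC x1 + b * RtoC x2)
                             + RtoC x2 * (b * RtoC x1 + c * RtoC x2)))
           - RtoC (2 * PI) * Ci * (RtoC x1 * (fst v + RtoC (fst c2))
                                  + RtoC x2 * (snd v + RtoC (snd c2))))
     * theta a b c ((fst c1 + x1)%R, (snd c1 + x2)%R) c2 v)%C.
Proof.
  intros HZ; rewrite !theta_box_lim, <- box_lim_scal by now apply theta_term_dominated.
  apply box_lim_ext; intros l1 l2.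
  unfold theta_term, vadd, Zx; rewrite <- cexp_add; f_equal; cbn [fst snd].
  rewrite !RtoC_plus, RtoC_mult; ring.
Qed.

(** * Translations preserving [C_A] *)

Lemma theta_A_char (a b c : C) (w : C * C) :
  theta_A a b c w = Cminus (theta a b c (0, 3 / 4) (0, 0) w) (theta a b c (0, 1 / 4) (0, 0) w).
Proof.
  unfold theta_A, omega; cbn [fst snd].
  now replace (3 * 0) with 0 by ring; replace (3 * (1 / 4)) with (3 / 4) by field.
Qed.

Definition translation_invariant (P : C * C -> Prop) (u : C * C) : Prop :=
  forall w, P (vadd w u) <-> P w.

Lemma translation_invariant_add (P : C * C -> Prop) (u1 u2 : C * C) :
  translation_invariant P u1 -> translation_invariant P u2 ->
  translation_invariant P (vadd u1 u2).
Proof.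
  intros H1 H2 w.
  replace (vadd w (vadd u1 u2)) with (vadd (vadd w u1) u2)
    by (unfold vadd; cbn [fst snd]; f_equal; ring).
  etransitivity; [apply H2 | apply H1].
Qed.

Lemma zero_set_translation_invariant (F : C * C -> C) (u : C * C) :
  (forall w, exists k : C, k <> 0%C /\ F (vadd w u) = (k * F w)%C) ->
  translation_invariant (fun w => F w = 0%C) u.
Proof.
  intros HF w; destruct (HF w) as [k [Hk ->]]; split; intros H.
  - replace (F w) with (/ k * (k * F w))%C by (field; exact Hk).
    rewrite H; ring.
  - rewrite H; ring.
Qed.

(* The characteristics [(0, 3/4)] and [(0, 1/4)] pick up the phases [e(3 n2 / 4)]
   and [e(n2 / 4)], which agree for even [n2]. *)
Lemma C_A_invariant_even_int (a b c : C) (n1 n2 : Z) :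
  siegel2 a b c -> Z.Even n2 ->
  translation_invariant (C_A a b c) (RtoC (IZR n1), RtoC (IZR n2)).
Proof.
  intros HZ [j ->]; apply zero_set_translation_invariant; intros w.
  rewrite !theta_A_char, !theta_translate_int by exact HZ; cbn [fst snd].
  replace (0 * IZR n1 + 3 / 4 * IZR (2 * j)) with (IZR j / 2 + IZR j)
    by (rewrite mult_IZR; field).
  replace (0 * IZR n1 + 1 / 4 * IZR (2 * j)) with (IZR j / 2)
    by (rewrite mult_IZR; field).
  rewrite cexp_2PI_i_periodic; set (k := cexp _).
  exists k; split; [apply cexp_neq0 | ring].
Qed.

Lemma C_A_invariant_period_int (a b c : C) (n1 n2 : Z) :
  siegel2 a b c -> translation_invariant (C_A a b c) (Zx a b c (IZR n1) (IZR n2)).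
Proof.
  intros HZ; apply zero_set_translation_invariant; intros w.
  rewrite !theta_A_char, !theta_translate_period by exact HZ; cbn [fst snd].
  rewrite !theta_char_shift by exact HZ; set (k := cexp _).
  exists k; split; [apply cexp_neq0 | ring].
Qed.

(* Half a period exchanges the characteristics [(0, 1/4)] and [(0, 3/4)]. *)
Lemma C_A_invariant_half_period (a b c : C) :
  siegel2 a b c -> translation_invariant (C_A a b c) (Zx a b c 0 (/ 2)).
Proof.
  intros HZ; apply zero_set_translation_invariant; intros w.
  rewrite !theta_A_char, !theta_translate_period by exact HZ; cbn [fst snd].
  replace (3 / 4 + / 2) with (1 / 4 + IZR 1) by (simpl; field).
  replace (1 / 4 + / 2) with (3 / 4) by field.
  rewrite (theta_char_shift _ _ _ _ _ 0 (1 / 4) 0 1), Rplus_0_r by exact HZ.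
  set (k := cexp _); assert (Hk : k <> 0%C) by apply cexp_neq0.
  exists (- k)%C; split; [| ring].
  contradict Hk; replace k with (- - k)%C by ring; rewrite Hk; ring.
Qed.

(** * The lattice and [K(L_0) ∩ A[2]] *)

Definition Zx_plus_y (a b c : C) (x1 x2 y1 y2 : R) : C * C :=
  vadd (Zx a b c x1 x2) (RtoC y1, RtoC y2).

Lemma Zx_plus_y_add (a b c : C) (x1 x2 y1 y2 x1' x2' y1' y2' : R) :
  vadd (Zx_plus_y a b c x1 x2 y1 y2) (Zx_plus_y a b c x1' x2' y1' y2')
  = Zx_plus_y a b c (x1 + x1') (x2 + x2') (y1 + y1') (y2 + y2').
Proof. unfold Zx_plus_y, Zx, vadd; cbn [fst snd]; f_equal; rewrite !RtoC_plus; ring. Qed.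

Lemma Zx_plus_y_sub (a b c : C) (x1 x2 y1 y2 x1' x2' y1' y2' : R) :
  vsub (Zx_plus_y a b c x1 x2 y1 y2) (Zx_plus_y a b c x1' x2' y1' y2')
  = Zx_plus_y a b c (x1 - x1') (x2 - x2') (y1 - y1') (y2 - y2').
Proof. unfold Zx_plus_y, Zx, vsub, vadd; cbn [fst snd]; f_equal; rewrite !RtoC_minus; ring. Qed.

Lemma Zx_plus_y_scal (a b c : C) (k x1 x2 y1 y2 : R) :
  vscal (RtoC k) (Zx_plus_y a b c x1 x2 y1 y2)
  = Zx_plus_y a b c (k * x1) (k * x2) (k * y1) (k * y2).
Proof. unfold Zx_plus_y, Zx, vscal, vadd; cbn [fst snd]; f_equal; rewrite !RtoC_mult; ring. Qed.

(* The imaginary parts of the two coordinates are [Im Z x], and [Im Z] is invertible. *)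
Lemma Zx_plus_y_inj (a b c : C) (x1 x2 y1 y2 x1' x2' y1' y2' : R) :
  siegel2 a b c -> Zx_plus_y a b c x1 x2 y1 y2 = Zx_plus_y a b c x1' x2' y1' y2' ->
  x1 = x1' /\ x2 = x2' /\ y1 = y1' /\ y2 = y2'.
Proof.
  destruct a as [a1 a2], b as [b1 b2], c as [c1 c2]; intros [Hp Hd] H.
  unfold Zx_plus_y, Zx, vadd in H; cbn in Hp, Hd, H.
  injection H as H1 H2 H3 H4.
  assert (G2 : a2 * (x1 - x1') + b2 * (x2 - x2') = 0) by lra.
  assert (G4 : b2 * (x1 - x1') + c2 * (x2 - x2') = 0) by lra.
  assert (Hx1 : (a2 * c2 - b2 * b2) * (x1 - x1') = 0).
  { transitivity (c2 * (a2 * (x1 - x1') + b2 * (x2 - x2'))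
                  - b2 * (b2 * (x1 - x1') + c2 * (x2 - x2'))); [ring | rewrite G2, G4; ring]. }
  assert (Hx2 : (a2 * c2 - b2 * b2) * (x2 - x2') = 0).
  { transitivity (a2 * (b2 * (x1 - x1') + c2 * (x2 - x2'))
                  - b2 * (a2 * (x1 - x1') + b2 * (x2 - x2'))); [ring | rewrite G2, G4; ring]. }
  apply Rmult_integral in Hx1 as [Hx1 | Hx1]; [lra|].
  apply Rmult_integral in Hx2 as [Hx2 | Hx2]; [lra|].
  assert (x1 = x1') by lra; assert (x2 = x2') by lra; subst; repeat split; lra.
Qed.

Lemma in_lattice_iff (a b c : C) (l : C * C) :
  in_lattice a b c l <->
  exists n1 n2 m1 m2, l = Zx_plus_y a b c (IZR n1) (IZR n2) (IZR m1) (4 * IZR m2).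
Proof.
  split; intros (n1 & n2 & m1 & m2 & ->); exists n1, n2, m1, m2;
    unfold Zx_plus_y, Zx, vadd; cbn [fst snd]; f_equal; rewrite ?RtoC_mult; ring.
Qed.

Lemma E_L0_Zx_plus_y (a b c : C) (x1 x2 y1 y2 x1' x2' y1' y2' : R) :
  siegel2 a b c ->
  E_L0 a b c (Zx_plus_y a b c x1 x2 y1 y2) (Zx_plus_y a b c x1' x2' y1' y2')
  = x1 * y1' + x2 * y2' - y1 * x1' - y2 * x2'.
Proof.
  destruct a as [a1 a2], b as [b1 b2], c as [c1 c2]; intros [Hp Hd]; cbn in Hp, Hd.
  unfold E_L0, Zx_plus_y, Zx, vadd, Cconj; cbn; field; lra.
Qed.

Definition klein_point (a b c : C) (e : bool * bool) : C * C :=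
  Zx_plus_y a b c 0 (if fst e then / 2 else 0) 0 (if snd e then 2 else 0).

Lemma C_A_invariant_lattice (a b c : C) (l : C * C) :
  siegel2 a b c -> in_lattice a b c l -> translation_invariant (C_A a b c) l.
Proof.
  intros HZ Hl; apply in_lattice_iff in Hl as (n1 & n2 & m1 & m2 & ->).
  unfold Zx_plus_y; rewrite <- mult_IZR.
  apply translation_invariant_add;
    [apply C_A_invariant_period_int | apply C_A_invariant_even_int]; try assumption.
  exists (2 * m2)%Z; ring.
Qed.

Lemma C_A_invariant_klein_point (a b c : C) (e : bool * bool) :
  siegel2 a b c -> translation_invariant (C_A a b c) (klein_point a b c e).
Proof.
  intros HZ; destruct e as [e1 e2]; apply translation_invariant_add.
  - destruct e1; [now apply C_A_invariant_half_period|].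
    exact (C_A_invariant_period_int a b c 0 0 HZ).
  - destruct e2; apply C_A_invariant_even_int; try assumption;
      [exists 1%Z | exists 0%Z]; reflexivity.
Qed.

Lemma IZR_double_neq_pm1 (n : Z) : 2 * IZR n <> 1 /\ 2 * IZR n <> -1.
Proof. rewrite <- mult_IZR; split; intros H; apply eq_IZR in H; lia. Qed.

(* [E(v, .)] integral on the lattice forces [x1, y1] integral; [2 v] in the lattice
   leaves a class of [x2] mod [Z] in [{0, 1/2}] and of [y2] mod [4 Z] in [{0, 2}]. *)
Lemma K_cap_A2_decompose (a b c : C) (v : C * C) :
  siegel2 a b c -> in_K_cap_A2 a b c v ->
  exists l e, in_lattice a b c l /\ v = vadd l (klein_point a b c e).
Proof.
  intros HZ [HK HA]; apply in_lattice_iff in HA as (N1 & N2 & M1 & M2 & HA).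
  assert (Hv : v = Zx_plus_y a b c (/ 2 * IZR N1) (/ 2 * IZR N2) (/ 2 * IZR M1) (2 * IZR M2)).
  { transitivity (vscal (RtoC (/ 2)) (vscal 2 v)).
    - destruct v as [v1 v2]; unfold vscal; cbn [fst snd].
      f_equal; rewrite Cmult_assoc, <- RtoC_mult, Rinv_l, Cmult_1_l by lra; reflexivity.
    - rewrite HA, Zx_plus_y_scal; f_equal; field. }
  destruct (HK (Zx_plus_y a b c 0 0 1 0)) as [k1 Hk1].
  { apply in_lattice_iff; exists 0%Z, 0%Z, 1%Z, 0%Z; f_equal; ring. }
  destruct (HK (Zx_plus_y a b c 1 0 0 0)) as [k2 Hk2].
  { apply in_lattice_iff; exists 1%Z, 0%Z, 0%Z, 0%Z; f_equal; ring. }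
  rewrite Hv, E_L0_Zx_plus_y in Hk1, Hk2 by exact HZ.
  pose proof (Zdiv2_odd_eqn N2) as HN2; pose proof (Zdiv2_odd_eqn M2) as HM2.
  exists (Zx_plus_y a b c (IZR k1) (IZR (Z.div2 N2)) (IZR (- k2)) (4 * IZR (Z.div2 M2))),
    (Z.odd N2, Z.odd M2).
  split; [apply in_lattice_iff; eauto|].
  rewrite Hv; unfold klein_point; rewrite Zx_plus_y_add; cbn [fst snd]; f_equal.
  - lra.
  - rewrite HN2 at 1; rewrite plus_IZR, mult_IZR; destruct (Z.odd N2); simpl; lra.
  - rewrite opp_IZR; lra.
  - rewrite HM2 at 1; rewrite plus_IZR, mult_IZR; destruct (Z.odd M2); simpl; lra.
Qed.

Lemma klein_point_in_K_cap_A2 (a b c : C) (e : bool * bool) :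
  siegel2 a b c -> in_K_cap_A2 a b c (klein_point a b c e).
Proof.
  intros HZ; destruct e as [e1 e2]; split.
  - intros l Hl; apply in_lattice_iff in Hl as (n1 & n2 & m1 & m2 & ->).
    unfold klein_point; rewrite E_L0_Zx_plus_y by exact HZ; cbn [fst snd].
    exists ((if e1 then 2 * m2 else 0) - (if e2 then 2 * n2 else 0))%Z.
    rewrite minus_IZR; destruct e1, e2; rewrite ?mult_IZR; simpl; lra.
  - unfold in_A2, klein_point; rewrite Zx_plus_y_scal; apply in_lattice_iff.
    exists 0%Z, (if e1 then 1 else 0)%Z, 0%Z, (if e2 then 1 else 0)%Z.
    destruct e1, e2; cbn [fst snd]; f_equal; simpl; lra.
Qed.

Lemma klein_point_xorb (a b c : C) (x y : bool * bool) :
  in_lattice a b c (vsub (klein_point a b c (xorb (fst x) (fst y), xorb (snd x) (snd y)))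
                         (vadd (klein_point a b c x) (klein_point a b c y))).
Proof.
  destruct x as [x1 x2], y as [y1 y2]; unfold klein_point; cbn [fst snd].
  rewrite Zx_plus_y_add, Zx_plus_y_sub; apply in_lattice_iff.
  exists 0%Z, (if andb x1 y1 then -1 else 0)%Z, 0%Z, (if andb x2 y2 then -1 else 0)%Z.
  destruct x1, x2, y1, y2; simpl; f_equal; lra.
Qed.

Lemma klein_point_inj (a b c : C) (x y : bool * bool) :
  siegel2 a b c -> in_lattice a b c (vsub (klein_point a b c x) (klein_point a b c y)) -> x = y.
Proof.
  intros HZ Hl; apply in_lattice_iff in Hl as (n1 & n2 & m1 & m2 & Hl).
  unfold klein_point in Hl; rewrite Zx_plus_y_sub in Hl.
  apply Zx_plus_y_inj in Hl as (_ & Hx2 & _ & Hy2); [|exact HZ].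
  destruct (IZR_double_neq_pm1 n2) as [Hn1 Hn2], (IZR_double_neq_pm1 m2) as [Hm1 Hm2].
  destruct x as [[|] [|]], y as [[|] [|]]; cbn [fst snd] in Hx2, Hy2; try reflexivity;
    exfalso; first [apply Hn1 | apply Hn2 | apply Hm1 | apply Hm2]; lra.
Qed.

Theorem corollary3p5 (a b c : C) (hZ : siegel2 a b c) :
  (forall v : C * C, in_K_cap_A2 a b c v ->
     forall w : C * C, C_A a b c (vadd w v) <-> C_A a b c w) /\
  (exists f : bool * bool -> C * C, klein_iso a b c f).
Proof.
  split.
  - intros v Hv; destruct (K_cap_A2_decompose a b c v hZ Hv) as (l & e & Hl & ->).
    apply translation_invariant_add;
      [apply C_A_invariant_lattice | apply C_A_invariant_klein_point]; assumption.
  - exists (klein_point a b c); split; [|split; [|split]].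
    + intros e; now apply klein_point_in_K_cap_A2.
    + intros x y; apply klein_point_xorb.
    + intros x y; now apply klein_point_inj.
    + intros v Hv; destruct (K_cap_A2_decompose a b c v hZ Hv) as (l & e & Hl & ->).
      exists e; replace (vsub _ _) with l; [exact Hl|].
      unfold vsub, vadd; destruct l; cbn [fst snd]; f_equal; ring.
Qed.
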